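(* Let $Y$ be any uniformly monotone Banach lattice. Then the pair $(c_0,Y)$ has the Bishop-Phelps-Bollobás property for positive operators. Moreover, the function $\eta$ in the definition of this property can be chosen depending only on the modulus of uniform monotonicity of $Y$.
   Context: All spaces are real; $c_0$ carries the sup norm and coordinatewise order. For a Banach space $X$, $B_X$ and $S_X$ denote the closed unit ball and unit sphere; $L(X,Y)$ is the space of bounded linear operators with the operator norm. An operator $T$ between Banach lattices is positive if $x\ge0$ implies $Tx\ge 0$. A Banach lattice $E$ is uniformly monotone if for every $\varepsilon>0$ there is $\delta(\varepsilon)>0$ (the modulus of uniform monotonicity) such that whenever $x\in S_E$, $y\in E$, $x,y\ge0$, and $\Vert x+y\Vert\le 1+\delta(\varepsilon)$, then $\Vert y\Vert\le\varepsilon$. A pair $(X,Y)$ of Banach lattices has the Bishop-Phelps-Bollobás property for positive operators if for every $0<\varepsilon<1$ there exists $0<\eta(\varepsilon)<\varepsilon$ such that for every positive $S\in S_{L(X,Y)}$ and every $x_0\in S_X$ with $\Vert S(x_0)\Vert>1-\eta(\varepsilon)$, there exist $u_0\in S_X$ and a positive operator $T\in S_{L(X,Y)}$ with $\Vert T(u_0)\Vert=1$, $\Vert u_0-x_0\Vert<\varepsilon$ and $\Vert T-S\Vert<\varepsilon$. *)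

From HB Require Import structures.
From mathcomp Require Import all_boot all_order all_algebra.
From mathcomp Require Import all_classical all_reals.
From mathcomp Require Import topology normedtype sequences.
Set Implicit Arguments. Unset Strict Implicit. Unset Printing Implicit Defensive.
Import Order.TTheory GRing.Theory Num.Theory.
Import numFieldNormedType.Exports.
Local Open Scope classical_set_scope.
Local Open Scope ring_scope.

Section BL.
Variable R : realType.

Definition is_lub2 (Y : normedModType R) (le : Y -> Y -> Prop) (x y z : Y) :=
  le x z /\ le y z /\ (forall w, le x w -> le y w -> le z w).

Definition is_banach_lattice (Y : completeNormedModType R) (le : Y -> Y -> Prop) :=
  (forall x, le x x) /\
  (forall x y, le x y -> le y x -> x = y) /\
  (forall x y z, le x y -> le y z -> le x z) /\
  (forall x y z, le x y -> le (x + z) (y + z)) /\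
  (forall (a : R) x y, 0 <= a -> le x y -> le (a *: x) (a *: y)) /\
  (forall x y, exists z, is_lub2 le x y z) /\
  (* lattice norm: |x| <= |y| implies ||x|| <= ||y||, with |x| = x \/ -x *)
  (forall x y ax ay, is_lub2 le x (- x) ax -> is_lub2 le y (- y) ay ->
     le ax ay -> `|x| <= `|y|).

Definition um_modulus (Y : completeNormedModType R) (le : Y -> Y -> Prop)
    (delta : R -> R) :=
  forall eps : R, 0 < eps -> 0 < delta eps /\
    (forall x y : Y, `|x| = 1 -> le 0 x -> le 0 y ->
       `|x + y| <= 1 + delta eps -> `|y| <= eps).

Definition uniformly_monotone (Y : completeNormedModType R) (le : Y -> Y -> Prop) :=
  forall eps : R, 0 < eps -> exists2 delta : R, 0 < delta &
    (forall x y : Y, `|x| = 1 -> le 0 x -> le 0 y ->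
       `|x + y| <= 1 + delta -> `|y| <= eps).

Definition c0 (x : nat -> R) : Prop := x @ \oo --> (0 : R).

Definition c0norm (x : nat -> R) : R := sup [set `|x n| | n in [set: nat]].

(** Operators c_0 -> Y, represented by their action on c_0 elements. *)
Definition c0_linear (Y : normedModType R) (T : (nat -> R) -> Y) :=
  forall (a : R) x y, c0 x -> c0 y ->
    T (fun n => a * x n + y n) = a *: T x + T y.

Definition c0_bounded (Y : normedModType R) (T : (nat -> R) -> Y) :=
  exists M : R, forall x, c0 x -> `|T x| <= M * c0norm x.

Definition opnorm (Y : normedModType R) (T : (nat -> R) -> Y) : R :=
  sup [set `|T x| | x in [set x | c0 x /\ c0norm x <= 1]].

Definition in_op_sphere (Y : normedModType R) (T : (nat -> R) -> Y) :=
  [/\ c0_linear T, c0_bounded T & opnorm T = 1].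

Definition positive_op (Y : normedModType R) (le : Y -> Y -> Prop)
    (T : (nat -> R) -> Y) :=
  forall x, c0 x -> (forall n, 0 <= x n) -> le 0 (T x).

Definition BPBp_pos_with (Y : normedModType R) (le : Y -> Y -> Prop)
    (eta : R -> R) :=
  forall eps : R, 0 < eps < 1 ->
    0 < eta eps < eps /\
    forall (S : (nat -> R) -> Y) (x0 : nat -> R),
      positive_op le S -> in_op_sphere S ->
      c0 x0 -> c0norm x0 = 1 -> `|S x0| > 1 - eta eps ->
      exists (u0 : nat -> R) (T : (nat -> R) -> Y),
        [/\ c0 u0 /\ c0norm u0 = 1, positive_op le T /\ in_op_sphere T,
            `|T u0| = 1,
            c0norm (fun n => u0 n - x0 n) < eps &
            opnorm (fun x => T x - S x) < eps].

Definition BPBp_pos (Y : normedModType R) (le : Y -> Y -> Prop) :=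
  exists eta : R -> R, BPBp_pos_with le eta.

End BL.

From HB Require Import structures.
From mathcomp Require Import all_boot all_order all_algebra.
From mathcomp Require Import all_classical all_reals.
From mathcomp Require Import topology normedtype sequences.
From mathcomp Require Import lra.
Import Order.TTheory GRing.Theory Num.Theory.
Import numFieldNormedType.Exports.
Local Open Scope ring_scope.

(* Let S be positive of norm one and ||S x0|| > 1 - eta.  Uniform monotonicity
   of Y forces ||S x|| <= k for every x of norm at most one supported where
   |x0 n| <= 1 - k, so only the finitely many "peak" coordinates A where
   |x0 n| > 1 - k matter.  Put u0 := sign x0 on A and u0 := x0 elsewhere, and
   let p (resp. q) be the sum of the S e_n over the n in A with x0 n >= 0
   (resp. < 0).  A Riesz decomposition of p /\ q inside these sums splits each
   S e_n into v_n + w_n with 0 <= v_n, sum_n v_n = |p - q| and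
   sum_n sign (x0 n) v_n = p - q.  Since |p - q| + 2 (p /\ q) = p + q has norm at
   most one while ||p - q|| is close to one, uniform monotonicity makes
   sum_n w_n small; hence T x := ||p - q||^-1 sum_n x_n v_n is a positive
   norm-one operator attaining its norm at u0 and close to S. *)

Set Implicit Arguments. Unset Strict Implicit.

(* Closes an identity in an abelian group by cancelling opposite terms. *)
Ltac zmod_eq :=
  apply/eqP; rewrite -subr_eq0; apply/eqP; rewrite ?opprD ?opprK ?opprB ?addrA;
  repeat (match goal with |- context [- ?x] =>
            repeat rewrite (addrAC _ x); repeat rewrite (addrAC _ (- x));
            first [rewrite subrK | rewrite addrK | rewrite addNr | rewrite subrr]
          end; rewrite ?addr0 ?add0r ?subr0 ?sub0r ?oppr0);
  rewrite ?oppr0 ?addr0.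

Section BanachLattice.
Variables (R : realType) (Y : completeNormedModType R) (le : Y -> Y -> Prop).
Hypothesis HBL : is_banach_lattice le.

Lemma lat_refl x : le x x.
Proof. by case: HBL. Qed.

Lemma lat_anti x y : le x y -> le y x -> x = y.
Proof. by case: HBL => _ [H _]; apply: H. Qed.

Lemma lat_trans x y z : le x y -> le y z -> le x z.
Proof. by case: HBL => _ [_ [H _]]; apply: H. Qed.

Lemma lat_addr x y z : le x y -> le (x + z) (y + z).
Proof. by case: HBL => _ [_ [_ [H _]]]; apply: H. Qed.

Lemma lat_scale (a : R) x y : 0 <= a -> le x y -> le (a *: x) (a *: y).
Proof. by case: HBL => _ [_ [_ [_ [H _]]]]; apply: H. Qed.

Lemma lat_lub x y : exists z, is_lub2 le x y z.
Proof. by case: HBL => _ [_ [_ [_ [_ [H _]]]]]; apply: H. Qed.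

Lemma lat_norm x y ax ay : is_lub2 le x (- x) ax -> is_lub2 le y (- y) ay ->
  le ax ay -> `|x| <= `|y|.
Proof. by case: HBL => _ [_ [_ [_ [_ [_ H]]]]]; apply: H. Qed.

Lemma lat_subr_ge0 x y : le 0 (y - x) <-> le x y.
Proof.
split=> [|H]; first by move/(lat_addr x); rewrite add0r subrK.
by have := lat_addr (- x) H; rewrite subrr.
Qed.

Lemma lat_addr_ge0 a b : le 0 a -> le 0 b -> le 0 (a + b).
Proof. by move=> Ha Hb; apply: lat_trans Hb _; have := lat_addr b Ha; rewrite add0r. Qed.

Lemma lat_scaler_ge0 (k : R) a : 0 <= k -> le 0 a -> le 0 (k *: a).
Proof. by move=> Hk /(lat_scale Hk); rewrite scaler0. Qed.

Lemma lat_lerD x1 x2 y1 y2 : le x1 x2 -> le y1 y2 -> le (x1 + y1) (x2 + y2).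
Proof.
move=> /lat_subr_ge0 H1 /lat_subr_ge0 H2; apply/lat_subr_ge0.
by rewrite opprD addrACA; apply: lat_addr_ge0.
Qed.

Lemma lat_sumr_ge0 (I : Type) (r : seq I) (P : pred I) (F : I -> Y) :
  (forall i, P i -> le 0 (F i)) -> le 0 (\sum_(i <- r | P i) F i).
Proof. by move=> H; apply: big_rec => [|i x /H]; [apply: lat_refl | apply: lat_addr_ge0]. Qed.

Lemma lat_ler_sum (I : Type) (r : seq I) (P : pred I) (F G : I -> Y) :
  (forall i, P i -> le (F i) (G i)) ->
  le (\sum_(i <- r | P i) F i) (\sum_(i <- r | P i) G i).
Proof. by move=> H; apply: big_rec2 => [|i x y /H]; [apply: lat_refl | apply: lat_lerD]. Qed.

Lemma lat_double_le a b : le (a + a) (b + b) -> le a b.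
Proof.
have twiceE z : z + z = (2 : R) *: z by rewrite scaler_nat mulr2n.
have half_ge0 : 0 <= (2 : R)^-1 by rewrite invr_ge0.
move=> /(lat_scale half_ge0); rewrite !twiceE !scalerA.
by rewrite mulVf ?pnatr_eq0 // !scale1r.
Qed.

Lemma lat_ge0_sym x y : le (- y) x -> le x y -> le 0 y.
Proof.
move=> H1 H2; apply: lat_double_le; rewrite addr0.
by have /lat_subr_ge0 := lat_trans H1 H2; rewrite opprK.
Qed.

Lemma lat_oppr_le x y : le (- y) x -> le (- x) y.
Proof. by move=> /lat_subr_ge0 H; apply/lat_subr_ge0; rewrite opprK addrC -[y]opprK. Qed.

Lemma lub_abs_ge0 j : le 0 j -> is_lub2 le j (- j) j.
Proof.
move=> Hj; split; first exact: lat_refl.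
by split=> //; apply/lat_subr_ge0; rewrite opprK; apply: lat_addr_ge0.
Qed.

Lemma lat_norm_le x y : le (- y) x -> le x y -> `|x| <= `|y|.
Proof.
move=> H1 H2; have [ax Hax] := lat_lub x (- x).
apply: (lat_norm Hax (lub_abs_ge0 (lat_ge0_sym H1 H2))).
by case: Hax => _ [_]; apply=> //; apply: lat_oppr_le.
Qed.

Lemma lat_norm_abs x j : is_lub2 le x (- x) j -> `|x| = `|j|.
Proof.
move=> Hj; have Hj0 : le 0 j by case: Hj => H1 [/lat_oppr_le H2 _]; apply: lat_ge0_sym H2 H1.
apply/eqP; rewrite eq_le (lat_norm Hj (lub_abs_ge0 Hj0) (lat_refl j)).
exact: (lat_norm (lub_abs_ge0 Hj0) Hj (lat_refl j)).
Qed.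

Lemma lub_meet p q l : le 0 p -> le 0 q -> is_lub2 le p q l ->
  [/\ le 0 (p + q - l), le (p + q - l) p & le (p + q - l) q].
Proof.
move=> Hp Hq [Hpl [Hql Hlub]]; split.
- apply/lat_subr_ge0; apply: Hlub; apply/lat_subr_ge0.
    by have -> : p + q - p = q by zmod_eq.
  by have -> : p + q - q = p by zmod_eq.
- apply/lat_subr_ge0; have -> : p - (p + q - l) = l - q by zmod_eq.
  by apply/lat_subr_ge0.
- apply/lat_subr_ge0; have -> : q - (p + q - l) = l - p by zmod_eq.
  by apply/lat_subr_ge0.
Qed.

Lemma lub_abs_sub p q l : is_lub2 le p q l ->
  is_lub2 le (p - q) (- (p - q)) (l + l - p - q).
Proof.
move=> [/lat_subr_ge0 Hpl [/lat_subr_ge0 Hql Hlub]]; split; [|split].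
- apply/lat_subr_ge0; have -> : l + l - p - q - (p - q) = (l - p) + (l - p) by zmod_eq.
  exact: lat_addr_ge0.
- apply/lat_subr_ge0; have -> : l + l - p - q - - (p - q) = (l - q) + (l - q) by zmod_eq.
  exact: lat_addr_ge0.
- move=> w /lat_subr_ge0 H1 /lat_subr_ge0 H2; apply/lat_subr_ge0.
  have -> : w - (l + l - p - q) = (w + p + q) - (l + l) by zmod_eq.
  set h := 2^-1 *: (w + p + q).
  have hhE : h + h = w + p + q.
    by rewrite -scalerDl -div1r -splitr scale1r.
  have Hlh : le l h.
    apply: Hlub; apply: lat_double_le; rewrite hhE; apply/lat_subr_ge0.
    + by have -> : w + p + q - (p + p) = w - (p - q) by zmod_eq.
    + by have -> : w + p + q - (q + q) = w - - (p - q) by zmod_eq.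
  by apply/lat_subr_ge0; rewrite -hhE; apply: lat_lerD.
Qed.

Lemma riesz_decomposition (y : nat -> Y) (P : pred nat) N m :
  (forall n, le 0 (y n)) -> le 0 m -> le m (\sum_(0 <= n < N | P n) y n) ->
  exists2 w : nat -> Y, (forall n, le 0 (w n) /\ le (w n) (y n)) &
    \sum_(0 <= n < N | P n) w n = m.
Proof.
have sum_recr (f : nat -> Y) K : \sum_(0 <= n < K.+1 | P n) f n =
    \sum_(0 <= n < K | P n) f n + (if P K then f K else 0).
  by rewrite big_mkcond big_nat_recr //= -big_mkcond.
move=> Hy; elim: N m => [|N IH] m Hm.
  rewrite big_geq // => Hm0; exists (fun=> 0); last by rewrite big_geq //; apply: lat_anti.
  by move=> n; split; [apply: lat_refl | apply: Hy].
rewrite sum_recr; set s := \sum_(0 <= n < N | P n) y n.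
case HP: (P N); rewrite ?addr0 => HmS; last first.
  have [w Hw Hw_sum] := IH m Hm HmS.
  by exists w => //; rewrite sum_recr HP addr0.
(* Coordinate N receives m /\ y N = m + y N - l; the remainder l - y N <= s is
   distributed over the first N coordinates by induction. *)
have [l Hl] := lat_lub m (y N).
have [Hmeet0 Hmeet_m Hmeet_y] := lub_meet Hm (Hy N) Hl.
case: Hl => _ [/lat_subr_ge0 HyNl Hlub].
have Hs : le 0 s by apply: lat_sumr_ge0 => n _; apply: Hy.
have Hls : le (l - y N) s.
  apply/lat_subr_ge0; have -> : s - (l - y N) = s + y N - l by zmod_eq.
  apply/lat_subr_ge0/Hlub => //; apply/lat_subr_ge0.
  by have -> : s + y N - y N = s by zmod_eq.
have [w Hw Hw_sum] := IH _ HyNl Hls.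
exists (fun n => if n == N then m + y N - l else w n).
  by move=> n; case: eqP => [->|_]; [split | exact: Hw].
rewrite sum_recr eqxx HP -[RHS](_ : (l - y N) + (m + y N - l) = m); last by zmod_eq.
congr (_ + _); rewrite -Hw_sum.
by apply: congr_big_nat => // n /and3P [_ _ HnN]; rewrite (ltn_eqF HnN).
Qed.

Lemma sign_decomposition (y : nat -> Y) (c : pred nat) N :
  (forall n, le 0 (y n)) ->
  let p := \sum_(0 <= n < N | c n) y n in let q := \sum_(0 <= n < N | ~~ c n) y n in
  exists2 v : nat -> Y, (forall n, le 0 (v n) /\ le (v n) (y n)) &
    is_lub2 le (p - q) (- (p - q)) (\sum_(0 <= n < N) v n) /\
    \sum_(0 <= n < N | c n) v n - \sum_(0 <= n < N | ~~ c n) v n = p - q.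
Proof.
move=> Hy p q.
have Hp : le 0 p by apply: lat_sumr_ge0 => n _; apply: Hy.
have Hq : le 0 q by apply: lat_sumr_ge0 => n _; apply: Hy.
have [l Hl] := lat_lub p q.
have [Hm0 Hmp Hmq] := lub_meet Hp Hq Hl.
have [wp Hwp Hwp_sum] := riesz_decomposition Hy Hm0 Hmp.
have [wq Hwq Hwq_sum] := riesz_decomposition Hy Hm0 Hmq.
pose w n := if c n then wp n else wq n.
have Hw n : le 0 (w n) /\ le (w n) (y n) by rewrite /w; case: (c n).
exists (fun n => y n - w n).
  move=> n; have [Hw0 Hwy] := Hw n; split; first exact/lat_subr_ge0.
  by apply/lat_subr_ge0; rewrite opprB addrC subrK.
have sum_c : \sum_(0 <= n < N | c n) (y n - w n) = p - (p + q - l).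
  by rewrite sumrB -Hwp_sum; congr (_ - _); apply: eq_bigr => n Hc; rewrite /w Hc.
have sum_nc : \sum_(0 <= n < N | ~~ c n) (y n - w n) = q - (p + q - l).
  by rewrite sumrB -Hwq_sum; congr (_ - _); apply: eq_bigr => n /negbTE Hc; rewrite /w Hc.
split; last by rewrite sum_c sum_nc; zmod_eq.
rewrite (bigID c) /= sum_c sum_nc.
have -> : p - (p + q - l) + (q - (p + q - l)) = l + l - p - q by zmod_eq.
exact: lub_abs_sub.
Qed.

Lemma norm_sum_scale_le (I : Type) (r : seq I) (P : pred I) (x : I -> R) (v : I -> Y) :
  (forall i, le 0 (v i)) -> (forall i, -1 <= x i <= 1) ->
  `|\sum_(i <- r | P i) x i *: v i| <= `|\sum_(i <- r | P i) v i|.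
Proof.
move=> Hv Hx; apply: lat_norm_le; rewrite -?sumrN; apply: lat_ler_sum => i _;
  apply/lat_subr_ge0; have /andP [Hx1 Hx2] := Hx i.
- rewrite opprK -{2}[v i]scale1r -scalerDl.
  by apply: lat_scaler_ge0 => //; rewrite -lerBlDr sub0r.
- rewrite -{1}[v i]scale1r -scalerBl.
  by apply: lat_scaler_ge0 => //; rewrite subr_ge0.
Qed.

Lemma um_modulus_scaled (delta : R -> R) (e : R) (X Z : Y) :
  um_modulus le delta -> 0 < e -> le 0 X -> le 0 Z -> 0 < `|X| ->
  `|X + Z| <= `|X| * (1 + delta e) -> `|Z| <= `|X| * e.
Proof.
move=> Hum He HX HZ HX0 HXZ.
have Hs : 0 <= `|X|^-1 by rewrite invr_ge0 ltW.
have := (Hum e He).2 (`|X|^-1 *: X) (`|X|^-1 *: Z).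
rewrite -scalerDr !normrZ ger0_norm // mulVf ?gt_eqF //.
move=> /(_ erefl (lat_scaler_ge0 Hs HX) (lat_scaler_ge0 Hs HZ)).
by rewrite !ler_pdivrMl //; apply.
Qed.

End BanachLattice.

Section SequenceSpace.
Variable R : realType.
Implicit Types x y : nat -> R.

Lemma c0P x : c0 x <->
  forall e : R, 0 < e -> exists N, forall n, (N <= n)%N -> `|x n| < e.
Proof.
split=> [/cvgr0Pnorm_lt H e /H [N _ HN]|H]; first by exists N => n /HN.
by apply/cvgr0Pnorm_lt => e /H [N HN]; exists N.
Qed.

Lemma c0_dom x y : c0 y -> (forall n, `|x n| <= `|y n|) -> c0 x.
Proof.
move=> /c0P Hy Hxy; apply/c0P => e /Hy [N HN].
by exists N => n /HN; apply: le_lt_trans.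
Qed.

Lemma c0_finsupp x N : (forall n, (N <= n)%N -> x n = 0) -> c0 x.
Proof. by move=> Hx; apply/c0P => e He; exists N => n /Hx ->; rewrite normr0. Qed.

Lemma c0_0 : c0 (fun _ => 0 : R).
Proof. exact: (c0_finsupp (N := 0)). Qed.

Lemma c0_comb (a : R) x y : c0 x -> c0 y -> c0 (fun n => a * x n + y n).
Proof.
move=> Hx Hy; rewrite /c0 -[0 : R]addr0 -{1}(mulr0 a).
exact: cvgD (cvgM (cvg_cst a) Hx) Hy.
Qed.

Lemma c0_add x y : c0 x -> c0 y -> c0 (fun n => x n + y n).
Proof. by move=> Hx Hy; have := c0_comb 1 Hx Hy; under eq_fun do rewrite mul1r. Qed.

Lemma c0_sub x y : c0 x -> c0 y -> c0 (fun n => x n - y n).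
Proof. by move=> Hx Hy; have := c0_comb (-1) Hy Hx; under eq_fun do rewrite mulN1r addrC. Qed.

Lemma c0_scale (a : R) x : c0 x -> c0 (fun n => a * x n).
Proof.
move=> Hx; have := c0_comb a Hx c0_0.
by under eq_fun do rewrite addr0.
Qed.

Lemma c0norm_ge x n : c0 x -> `|x n| <= c0norm x.
Proof.
move=> Hx; have [M [_ HM]] := cvg_seq_bounded (cvgP _ Hx).
apply: sup_upper_bound; last by exists n.
split; first by exists `|x 0%N|, 0%N.
by exists (M + 1) => _ [k _ <-]; apply: (HM (M + 1)); rewrite ?ltrDl.
Qed.

Lemma c0norm_le x b : (forall n, `|x n| <= b) -> c0norm x <= b.
Proof. by move=> Hb; apply: ge_sup => [|_ [k _ <-]]; [exists `|x 0%N|, 0%N | apply: Hb]. Qed.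

Lemma c0norm_ge0 x : c0 x -> 0 <= c0norm x.
Proof. by move=> Hx; apply: le_trans (c0norm_ge 0 Hx). Qed.

Lemma c0norm_le1 x n : c0 x -> c0norm x <= 1 -> -1 <= x n <= 1.
Proof. by move=> Hx Hx1; rewrite -ler_norml; apply: le_trans (c0norm_ge n Hx) Hx1. Qed.

End SequenceSpace.

Arguments c0_0 {R}.

Definition unit_seq {R : realType} (n : nat) : nat -> R := fun k => (k == n)%:R.

Lemma c0_unit_seq (R : realType) n : c0 (@unit_seq R n).
Proof. by apply: (c0_finsupp (N := n.+1)) => k Hk; rewrite /unit_seq gtn_eqF. Qed.

Section C0Operators.
Variables (R : realType) (Y : normedModType R).
Local Open Scope classical_set_scope.
Implicit Types (T : (nat -> R) -> Y) (x y : nat -> R).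

Lemma c0_linear0 T : c0_linear T -> T (fun=> 0) = 0.
Proof.
move=> HT; have := HT (-1) _ _ c0_0 c0_0.
by under eq_fun do rewrite mulr0 addr0; rewrite scaleN1r addNr.
Qed.

Lemma c0_linearZ T a x : c0_linear T -> c0 x -> T (fun n => a * x n) = a *: T x.
Proof.
move=> HT Hx; have := HT a _ _ Hx c0_0.
by under eq_fun do rewrite addr0; rewrite c0_linear0 // addr0.
Qed.

Lemma c0_linearD T x y : c0_linear T -> c0 x -> c0 y ->
  T (fun n => x n + y n) = T x + T y.
Proof.
move=> HT Hx Hy; have := HT 1 _ _ Hx Hy.
by under eq_fun do rewrite mul1r; rewrite scale1r.
Qed.

Lemma c0_linearB T x y : c0_linear T -> c0 x -> c0 y ->
  T (fun n => x n - y n) = T x - T y.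
Proof.
move=> HT Hx Hy; have := HT (-1) _ _ Hy Hx.
by under eq_fun do rewrite mulN1r addrC; rewrite scaleN1r addrC.
Qed.

Lemma c0_linear_finsupp T x N : c0_linear T -> (forall n, (N <= n)%N -> x n = 0) ->
  T x = \sum_(0 <= n < N) x n *: T (unit_seq n).
Proof.
move=> HT; elim: N x => [|N IH] x Hx.
  rewrite big_geq // -(c0_linear0 HT); congr T; apply: funext => n; exact: Hx.
have Hx' n : (N <= n)%N -> (if (n < N)%N then x n else 0) = 0.
  by rewrite ltnNge => ->.
have Hdec : x = fun n => x N * unit_seq N n + (if (n < N)%N then x n else 0).
  apply: funext => n; rewrite /unit_seq.
  by case: ltngtP => [_|/Hx ->|->]; rewrite ?mulr0 ?mulr1 ?add0r ?addr0.
rewrite {1}Hdec HT; [|exact: c0_unit_seq|exact: c0_finsupp Hx'].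
rewrite (IH (fun n => if (n < N)%N then x n else 0)) // big_nat_recr //= addrC.
by congr (_ + _); apply: eq_big_nat => n /andP [_ ->].
Qed.

Lemma opnorm_set_neq0 T : [set `|T x| | x in [set x | c0 x /\ c0norm x <= 1]] !=set0.
Proof.
exists `|T (fun=> 0)|, (fun=> 0) => //; split; first exact: c0_0.
by apply: c0norm_le => n; rewrite normr0.
Qed.

Lemma norm_le_opnorm T x : c0_bounded T -> c0 x -> c0norm x <= 1 -> `|T x| <= opnorm T.
Proof.
move=> [M HM] Hx Hx1; apply: sup_upper_bound; last by exists x.
split; first exact: opnorm_set_neq0.
exists `|M| => _ [z [Hz Hz1] <-]; apply: le_trans (HM z Hz) _.
apply: le_trans (ler_wpM2r (c0norm_ge0 Hz) (ler_norm M)) _.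
by rewrite -[X in _ <= X]mulr1 ler_wpM2l.
Qed.

Lemma opnorm_le T b : (forall x, c0 x -> c0norm x <= 1 -> `|T x| <= b) -> opnorm T <= b.
Proof. by move=> H; apply: ge_sup => [|_ [z [Hz Hz1] <-]]; [exact: opnorm_set_neq0 | exact: H]. Qed.

Lemma op_sphere_norm_le T x : in_op_sphere T -> c0 x -> `|T x| <= c0norm x.
Proof.
case=> HL HB HN Hx; have [Hx0|Hx0] := eqVneq (c0norm x) 0.
  have -> : x = fun=> 0.
    apply: funext => n; apply/normr0_eq0/le_anti.
    by rewrite normr_ge0 andbT -Hx0 c0norm_ge.
  by rewrite c0_linear0 // normr0; apply/c0norm_ge0/c0_0.
have Hs : 0 < c0norm x by rewrite lt_def Hx0 c0norm_ge0.
have Hsx : c0norm (fun n => (c0norm x)^-1 * x n) <= 1.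
  apply: c0norm_le => n; rewrite normrM normfV (ger0_norm (ltW Hs)) ler_pdivrMl //.
  by rewrite mulr1 c0norm_ge.
have := norm_le_opnorm HB (c0_scale _ Hx) Hsx.
by rewrite HN c0_linearZ // normrZ normfV (ger0_norm (ltW Hs)) ler_pdivrMl // mulr1.
Qed.

Definition fin_op (v : nat -> Y) (N : nat) (x : nat -> R) : Y :=
  \sum_(0 <= n < N) x n *: v n.

Lemma fin_op_linear v N : c0_linear (fin_op v N).
Proof.
move=> a x y _ _; rewrite /fin_op scaler_sumr -big_split.
by apply: eq_bigr => n _; rewrite scalerDl scalerA.
Qed.

Lemma fin_op_bounded v N : c0_bounded (fin_op v N).
Proof.
exists (\sum_(0 <= n < N) `|v n|) => x Hx; rewrite /fin_op mulr_suml.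
apply: le_trans (ler_norm_sum _ _ _) _; apply: ler_sum => n _.
by rewrite normrZ mulrC ler_wpM2l // c0norm_ge.
Qed.

End C0Operators.

Section PositiveOperators.
Variables (R : realType) (Y : completeNormedModType R) (le : Y -> Y -> Prop).
Hypothesis HBL : is_banach_lattice le.

Lemma norm_pos_op_le (S : (nat -> R) -> Y) x g : positive_op le S -> c0_linear S ->
  c0 x -> c0 g -> (forall n, `|x n| <= g n) -> `|S x| <= `|S g|.
Proof.
move=> HP HL Hx Hg Hxg; apply: (lat_norm_le HBL); apply/(lat_subr_ge0 HBL).
- rewrite opprK addrC -c0_linearD //; apply: HP; first exact: c0_add.
  by move=> n; rewrite -lerBlDr sub0r; apply: le_trans (Hxg n); rewrite -normrN ler_norm.
- rewrite -c0_linearB //; apply: HP; first exact: c0_sub.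
  by move=> n; rewrite subr_ge0; apply: le_trans (Hxg n); exact: ler_norm.
Qed.

Lemma fin_op_pos (v : nat -> Y) N : (forall n, le 0 (v n)) -> positive_op le (fin_op v N).
Proof.
move=> Hv x _ Hx; apply: (lat_sumr_ge0 HBL) => n _.
exact: (lat_scaler_ge0 HBL (Hx n) (Hv n)).
Qed.

Lemma fin_op_sphere (v : nat -> Y) N u : (forall n, le 0 (v n)) ->
  `|\sum_(0 <= n < N) v n| = 1 -> c0 u -> c0norm u <= 1 -> `|fin_op v N u| = 1 ->
  in_op_sphere (fin_op v N).
Proof.
move=> Hv Hv1 Hu Hu1 HTu; split; [exact: fin_op_linear | exact: fin_op_bounded |].
apply/eqP; rewrite eq_le; apply/andP; split.
  apply: opnorm_le => x Hx Hx1; rewrite -Hv1.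
  by apply: (norm_sum_scale_le HBL) => // n; apply: c0norm_le1.
by rewrite -HTu; apply: norm_le_opnorm => //; exact: fin_op_bounded.
Qed.

End PositiveOperators.

Section PeakOperator.
Variables (R : realType) (Y : completeNormedModType R) (le : Y -> Y -> Prop).
Hypothesis HBL : is_banach_lattice le.
Variable delta : R -> R.
Hypothesis Hum : um_modulus le delta.
Variable S : (nat -> R) -> Y.
Hypotheses (HSp : positive_op le S) (HS : in_op_sphere S).

Let HSL : c0_linear S. Proof. by case: HS. Qed.

(* [lra] does not see section hypotheses, so the numeric ones are pushed onto
   the goal before calling it. *)
Section OffPeak.
Variables (k eta : R) (x0 : nat -> R) (A : pred nat).
Hypotheses (Hk : 0 < k) (Heta : eta * (1 + delta (k ^+ 2)) <= delta (k ^+ 2)).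
Hypotheses (Hx0 : c0 x0) (Hx01 : c0norm x0 <= 1).
Hypotheses (HAc : forall n, ~~ A n -> `|x0 n| <= 1 - k) (HSx0 : 1 - eta < `|S x0|).

(* Since |x0| + k h <= 1, the vector S |x0| + k S h has norm at most one, while
   ||S |x0||| > 1 - eta: uniform monotonicity bounds k ||S h|| by k ^+ 2. *)
Lemma norm_off_peak_ge0_le h : c0 h -> (forall n, 0 <= h n <= 1) ->
  (forall n, A n -> h n = 0) -> `|S h| <= k.
Proof.
move=> Hh Hh01 HhA.
have Hd : 0 < delta (k ^+ 2) := (Hum (exprn_gt0 2 Hk)).1.
pose ax n := `|x0 n|.
have Hax : c0 ax by apply: (c0_dom Hx0) => n; rewrite normr_id.
have Hkh : c0 (fun n => k * h n) := c0_scale k Hh.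
have HSax : 1 - eta < `|S ax|.
  by apply: lt_le_trans HSx0 (norm_pos_op_le HBL HSp HSL Hx0 Hax _) => n.
have HSax_kh : `|S ax + S (fun n => k * h n)| <= `|S ax| * (1 + delta (k ^+ 2)).
  rewrite -c0_linearD //; apply: le_trans (op_sphere_norm_le HS (c0_add Hax Hkh)) _.
  have Hd1 : 0 <= 1 + delta (k ^+ 2) by rewrite addr_ge0 ?ltW.
  have HsD := ler_wpM2r Hd1 (ltW HSax).
  have Hs1 : 1 <= `|S ax| * (1 + delta (k ^+ 2)) by have := Heta; lra.
  apply: (le_trans _ Hs1); apply: c0norm_le => n; have /andP [Hh0 Hh1] := Hh01 n.
  have Hkh1 : k * h n <= k by rewrite -[leRHS]mulr1 ler_pM2l.
  rewrite /ax ger0_norm; last by apply: addr_ge0 => //; apply: mulr_ge0 => //; exact: ltW.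
  case: (boolP (A n)) => HAn; last by have HxA := HAc HAn; lra.
  by rewrite HhA // mulr0 addr0 (le_trans (c0norm_ge n Hx0)).
have Heta1 : eta < 1 by have := Heta; nra.
have HSax_pos : 0 < `|S ax| by lra.
have HSax_le1 : `|S ax| <= 1.
  apply: le_trans (op_sphere_norm_le HS Hax) _; apply: c0norm_le => n.
  by rewrite normr_id (le_trans (c0norm_ge n Hx0)).
have := um_modulus_scaled HBL Hum (exprn_gt0 2 Hk) (HSp Hax (fun n => normr_ge0 _))
  (HSp Hkh (fun n => mulr_ge0 (ltW Hk) (proj1 (andP (Hh01 n))))) HSax_pos HSax_kh.
rewrite c0_linearZ // normrZ gtr0_norm // => Hkh_le.
rewrite -(ler_pM2l Hk); apply: le_trans Hkh_le _.
by rewrite expr2 ler_piMl // mulr_ge0 // ltW.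
Qed.

Lemma norm_off_peak_le x : c0 x -> c0norm x <= 1 ->
  `|S (fun n => if A n then 0 else x n)| <= k.
Proof.
move=> Hx Hx1; pose h n := if A n then 0 else `|x n|.
have Hh : c0 h by apply: (c0_dom Hx) => n; rewrite /h; case: (A n); rewrite ?normr0 ?normr_id.
have Hh01 n : 0 <= h n <= 1.
  by rewrite /h; case: (A n); rewrite ?lexx ?ler01 // normr_ge0 (le_trans (c0norm_ge n Hx)).
have HhA n : A n -> h n = 0 by rewrite /h => ->.
apply: (le_trans _ (norm_off_peak_ge0_le Hh Hh01 HhA)).
apply: (norm_pos_op_le HBL HSp HSL _ Hh) => [|n].
  by apply: (c0_dom Hx) => n; case: (A n); rewrite ?normr0.
by rewrite /h; case: (A n); rewrite ?normr0.
Qed.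

End OffPeak.

Section Peak.
Variables (x0 : nat -> R) (eps k eta : R) (N : nat).
Hypotheses (Hx0 : c0 x0) (Hx0n : c0norm x0 = 1).
Hypotheses (Hk : 0 < k) (Hk_eps : k <= eps / 24) (Heps1 : eps <= 1).
Hypothesis Hk_delta : 1 <= (1 - 3 * k) * (1 + delta (eps / 8)).
Hypotheses (Heta_k : eta <= k) (Heta_delta : eta * (1 + delta (k ^+ 2)) <= delta (k ^+ 2)).
Hypothesis HSx0 : 1 - eta < `|S x0|.
Hypothesis HN : forall n, (N <= n)%N -> `|x0 n| <= 1 - k.

Let peak : pred nat := fun n => 1 - k < `|x0 n|.
Let pos : pred nat := fun n => 0 <= x0 n.
Let u0 n : R := if peak n then (if pos n then 1 else -1) else x0 n.
Let y n : Y := if peak n then S (unit_seq n) else 0.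
Let p : Y := \sum_(0 <= n < N | pos n) y n.
Let q : Y := \sum_(0 <= n < N | ~~ pos n) y n.

Lemma peak_lt n : peak n -> (n < N)%N.
Proof. by move=> Hp; rewrite ltnNge; apply/negP => /HN; apply/negP; rewrite -ltNge. Qed.

Lemma off_peak_le n : ~~ peak n -> `|x0 n| <= 1 - k.
Proof. by rewrite -leNgt. Qed.

Lemma c0_on_peak (x : nat -> R) : c0 (fun n => if peak n then x n else 0).
Proof.
apply: (c0_finsupp (N := N)) => n HnN; case: ifP => // /peak_lt.
by rewrite ltnNge HnN.
Qed.

Lemma c0_off_peak (x : nat -> R) : c0 x -> c0 (fun n => if peak n then 0 else x n).
Proof. by move=> Hx; apply: (c0_dom Hx) => n; case: (peak n); rewrite ?normr0. Qed.

Lemma u0_sub_x0 n : `|u0 n - x0 n| <= k.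
Proof.
rewrite /u0; case: ifP => [Hp|_]; last by rewrite subrr normr0 ltW.
have := c0norm_ge n Hx0; rewrite Hx0n /pos => Hx01.
by have [Hc|Hc] := leP 0 (x0 n);
  [move: Hp Hx01; rewrite /peak ger0_norm // => Hp Hx01; rewrite ger0_norm; lra
  |move: Hp Hx01; rewrite /peak ltr0_norm // => Hp Hx01; rewrite ler0_norm; lra].
Qed.

Lemma c0_u0 : c0 u0.
Proof.
have Hd : c0 (fun n => u0 n - x0 n).
  apply: (c0_finsupp (N := N)) => n HnN; rewrite /u0; case: ifP => [/peak_lt|_].
    by rewrite ltnNge HnN.
  by rewrite subrr.
by have := c0_add Hx0 Hd; under eq_fun do rewrite addrC subrK.
Qed.

Lemma c0norm_u0 : c0norm u0 = 1.
Proof.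
have u0_peak n : peak n -> `|u0 n| = 1.
  by move=> Hp; rewrite /u0 Hp; case: (pos n); rewrite ?normrN normr1.
apply/eqP; rewrite eq_le; apply/andP; split.
  apply: c0norm_le => n; case: (boolP (peak n)) => [/u0_peak -> //|Hp].
  by rewrite /u0 (negbTE Hp) -Hx0n c0norm_ge.
case: (pselect (exists n, peak n)) => [[n Hn]|Hno].
  by rewrite -(u0_peak n Hn); apply: c0norm_ge; exact: c0_u0.
have : c0norm x0 <= 1 - k.
  by apply: c0norm_le => n; apply: off_peak_le; apply/negP => Hn; apply: Hno; exists n.
by rewrite Hx0n lerDl oppr_ge0 leNgt Hk.
Qed.

Lemma y_ge0 n : le 0 (y n).
Proof.
rewrite /y; case: (peak n); last exact: (lat_refl HBL 0).
by apply: HSp => [|i]; [exact: c0_unit_seq | exact: ler0n].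
Qed.

Lemma S_on_peak (x : nat -> R) : S (fun n => if peak n then x n else 0) = \sum_(0 <= n < N) x n *: y n.
Proof.
rewrite (c0_linear_finsupp (N := N) HSL) => [|n HnN].
  by apply: eq_bigr => n _; rewrite /y; case: (peak n); rewrite ?scale0r ?scaler0.
by case: ifP => // /peak_lt; rewrite ltnNge HnN.
Qed.

Lemma sum_u0_scale (f : nat -> Y) : (forall n, ~~ peak n -> f n = 0) ->
  \sum_(0 <= n < N) u0 n *: f n =
  \sum_(0 <= n < N | pos n) f n - \sum_(0 <= n < N | ~~ pos n) f n.
Proof.
move=> Hf; rewrite (bigID pos) /= -sumrN; congr (_ + _); apply: eq_bigr => n Hc;
  rewrite /u0; (case: (boolP (peak n)) => Hp; last by rewrite Hf // scaler0 ?oppr0).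
- by rewrite Hc scale1r.
- by rewrite (negbTE Hc) scaleN1r.
Qed.

Lemma S_u0_on_peak : S (fun n => if peak n then u0 n else 0) = p - q.
Proof. by rewrite S_on_peak sum_u0_scale // => n /negbTE Hp; rewrite /y Hp. Qed.

Lemma norm_add_pq_le1 : `|p + q| <= 1.
Proof.
have -> : p + q = S (fun n => if peak n then 1 else 0).
  by rewrite S_on_peak; under eq_bigr do rewrite scale1r; rewrite (bigID pos).
apply: le_trans (op_sphere_norm_le HS (c0_on_peak _)) _.
by apply: c0norm_le => n; case: (peak n); rewrite ?normr0 ?normr1.
Qed.

Lemma norm_sub_pq_gt : 1 - 3 * k < `|p - q|.
Proof.
have Hx01 : c0norm x0 <= 1 by rewrite Hx0n.
have Hdec : x0 = fun n =>
    (if peak n then u0 n else 0) + (if peak n then 0 else x0 n) - (u0 n - x0 n).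
  by apply: funext => n; rewrite /u0; case: (peak n) => /=; zmod_eq.
have HSu0 : S (fun n => (if peak n then u0 n else 0) + (if peak n then 0 else x0 n)) =
    (p - q) + S (fun n => if peak n then 0 else x0 n).
  by rewrite (c0_linearD HSL) ?S_u0_on_peak //; [exact: c0_on_peak | exact: c0_off_peak].
have HSdec : S x0 =
    (p - q) + S (fun n => if peak n then 0 else x0 n) - S (fun n => u0 n - x0 n).
  rewrite {1}Hdec (c0_linearB HSL) ?HSu0 //; last exact: c0_sub c0_u0 Hx0.
  exact: c0_add (c0_on_peak _) (c0_off_peak Hx0).
have HSd : `|S (fun n => u0 n - x0 n)| <= k.
  apply: le_trans (op_sphere_norm_le HS (c0_sub c0_u0 Hx0)) _.
  exact: c0norm_le u0_sub_x0.
have HSoff := norm_off_peak_le Hk Heta_delta Hx0 Hx01 off_peak_le HSx0 Hx0 Hx01.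
have HSx0_le : `|S x0| <= `|p - q| + k + k.
  rewrite HSdec; apply: le_trans (ler_normB _ _) _; apply: lerD => //.
  by apply: le_trans (ler_normD _ _) _; apply: lerD.
have := Heta_k; have := lt_le_trans HSx0 HSx0_le; lra.
Qed.

Lemma norm_sub_pq_le1 : `|p - q| <= 1.
Proof.
have Hp : le 0 p by apply: (lat_sumr_ge0 HBL) => n _; exact: y_ge0.
have Hq : le 0 q by apply: (lat_sumr_ge0 HBL) => n _; exact: y_ge0.
apply: le_trans norm_add_pq_le1; apply: (lat_norm_le HBL); apply/(lat_subr_ge0 HBL).
- have -> : p - q - - (p + q) = p + p by zmod_eq.
  exact: lat_addr_ge0.
- have -> : p + q - (p - q) = q + q by zmod_eq.
  exact: lat_addr_ge0.
Qed.

Section Construction.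
Variable v : nat -> Y.
Hypotheses (Hv : forall n, le 0 (v n) /\ le (v n) (y n))
  (Hv_abs : is_lub2 le (p - q) (- (p - q)) (\sum_(0 <= n < N) v n))
  (Hv_sign : \sum_(0 <= n < N | pos n) v n - \sum_(0 <= n < N | ~~ pos n) v n = p - q).

Let r := `|p - q|.
Let T := fin_op (fun n => r^-1 *: v n) N.

Lemma norm_sub_pq_gt0 : 0 < r.
Proof. by have := norm_sub_pq_gt; have := Hk_eps; have := Heps1; rewrite -/r; lra. Qed.

Lemma norm_sum_v : `|\sum_(0 <= n < N) v n| = r.
Proof. by rewrite /r (lat_norm_abs HBL Hv_abs). Qed.

Lemma norm_T_u0 : `|T u0| = 1.
Proof.
rewrite /T /fin_op sum_u0_scale => [|n Hp]; last first.
  have [Hv0 Hvy] := Hv n; have Hy0 : y n = 0 by rewrite /y (negbTE Hp).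
  by rewrite Hy0 in Hvy; rewrite (lat_anti HBL Hvy Hv0) scaler0.
have Hr : 0 < r := norm_sub_pq_gt0.
rewrite -!scaler_sumr -scalerBr Hv_sign normrZ -/r ger0_norm ?invr_ge0 ?(ltW Hr) //.
by rewrite mulVf // gt_eqF.
Qed.

Lemma T_pos_sphere : positive_op le T /\ in_op_sphere T.
Proof.
have Hr : 0 <= r^-1 by rewrite invr_ge0 ltW // norm_sub_pq_gt0.
have Hv' n : le 0 (r^-1 *: v n) := lat_scaler_ge0 HBL Hr (Hv n).1.
split; first exact: fin_op_pos.
apply: (fin_op_sphere HBL Hv' _ c0_u0 _ norm_T_u0); last by rewrite c0norm_u0.
by rewrite -scaler_sumr normrZ norm_sum_v ger0_norm // mulVf // gt_eqF // norm_sub_pq_gt0.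
Qed.

Lemma norm_rest_le : `|\sum_(0 <= n < N) (y n - v n)| <= r * (eps / 8).
Proof.
have He8 : 0 < eps / 8 by have := Hk_eps; have := Hk; lra.
have Hd8 : 0 < delta (eps / 8) := (Hum He8).1.
have Hz : le 0 (\sum_(0 <= n < N) (y n - v n)).
  by apply: (lat_sumr_ge0 HBL) => n _; apply/(lat_subr_ge0 HBL); exact: (Hv n).2.
have Hsv : le 0 (\sum_(0 <= n < N) v n).
  by apply: (lat_sumr_ge0 HBL) => n _; exact: (Hv n).1.
have Hsum : \sum_(0 <= n < N) v n + \sum_(0 <= n < N) (y n - v n) = p + q.
  by rewrite sumrB addrC subrK (bigID pos).
have Hr1 : 1 <= r * (1 + delta (eps / 8)).
  have := ler_wpM2r (ltW (addr_gt0 ltr01 Hd8)) (ltW norm_sub_pq_gt).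
  by have := Hk_delta; rewrite -/r; lra.
have Hsv0 : 0 < `|\sum_(0 <= n < N) v n| by rewrite norm_sum_v norm_sub_pq_gt0.
have Hsum_le : `|\sum_(0 <= n < N) v n + \sum_(0 <= n < N) (y n - v n)| <=
    `|\sum_(0 <= n < N) v n| * (1 + delta (eps / 8)).
  by rewrite Hsum norm_sum_v; apply: le_trans norm_add_pq_le1 Hr1.
by have := um_modulus_scaled HBL Hum He8 Hsv Hz Hsv0 Hsum_le; rewrite norm_sum_v.
Qed.

Lemma norm_T_sub_S x : c0 x -> c0norm x <= 1 -> `|T x - S x| <= (r^-1 - 1) + eps / 8 + k.
Proof.
move=> Hx Hx1.
set P := S (fun n => if peak n then x n else 0).
set Z := \sum_(0 <= n < N) x n *: (y n - v n).
set O := S (fun n => if peak n then 0 else x n).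
have HSx : S x = P + O.
  rewrite -(c0_linearD HSL); [|exact: c0_on_peak|exact: c0_off_peak].
  by congr S; apply: funext => n; case: (peak n); rewrite ?addr0 ?add0r.
have HTx : T x = r^-1 *: (P - Z).
  rewrite /P S_on_peak /Z -sumrB /T /fin_op scaler_sumr; apply: eq_bigr => n _.
  rewrite -scalerBr (_ : y n - (y n - v n) = v n); last by zmod_eq.
  by rewrite !scalerA mulrC.
have Hr : 0 < r := norm_sub_pq_gt0.
have Hr1 : 0 <= r^-1 - 1 by rewrite subr_ge0 invf_ge1 // norm_sub_pq_le1.
have HP : `|P| <= 1.
  apply: le_trans (op_sphere_norm_le HS (c0_on_peak _)) _.
  by apply: c0norm_le => n; case: (peak n); rewrite ?normr0 // (le_trans (c0norm_ge n Hx)).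
have HZ : `|Z| <= r * (eps / 8).
  apply: le_trans norm_rest_le; apply: (norm_sum_scale_le HBL) => [n|n].
    by apply/(lat_subr_ge0 HBL); exact: (Hv n).2.
  exact: c0norm_le1.
have Hx01 : c0norm x0 <= 1 by rewrite Hx0n.
have HO : `|O| <= k := norm_off_peak_le Hk Heta_delta Hx0 Hx01 off_peak_le HSx0 Hx Hx1.
have -> : T x - S x = (r^-1 - 1) *: P - r^-1 *: Z - O.
  by rewrite HTx HSx scalerBr scalerBl scale1r; zmod_eq.
apply: le_trans (ler_normB _ _) _; apply: lerD => //.
have Hrinv0 : 0 <= r^-1 by rewrite invr_ge0 ltW.
apply: le_trans (ler_normB _ _) _; rewrite !normrZ (ger0_norm Hr1) (ger0_norm Hrinv0).
apply: lerD; first by rewrite -[leRHS]mulr1 ler_wpM2l.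
by rewrite ler_pdivrMl // mulrC.
Qed.

Lemma opnorm_T_sub_S : opnorm (fun x => T x - S x) < eps.
Proof.
apply: le_lt_trans (opnorm_le norm_T_sub_S) _.
have Hr := norm_sub_pq_gt; have Hr_le1 := norm_sub_pq_le1; rewrite -/r in Hr Hr_le1.
have Hr0 : 0 < r := norm_sub_pq_gt0.
have Hrinv : r^-1 <= 8 / 7.
  by rewrite -div1r ler_pdivrMr //; have := Hk_eps; have := Heps1; lra.
have Hr1 : r^-1 - 1 = r^-1 * (1 - r) by rewrite mulrBr mulr1 mulVf // gt_eqF.
have : r^-1 * (1 - r) <= 8 / 7 * (3 * k).
  by apply: ler_pM; [rewrite invr_ge0 ltW | lra | exact: Hrinv | lra].
by rewrite -Hr1; have := Hk_eps; have := Hk; lra.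
Qed.

Lemma peak_operator_spec : exists (u0 : nat -> R) (T : (nat -> R) -> Y),
  [/\ c0 u0 /\ c0norm u0 = 1, positive_op le T /\ in_op_sphere T, `|T u0| = 1,
      c0norm (fun n => u0 n - x0 n) < eps & opnorm (fun x => T x - S x) < eps].
Proof.
exists u0, T; split; [split | exact: T_pos_sphere | exact: norm_T_u0 | | exact: opnorm_T_sub_S].
- exact: c0_u0.
- exact: c0norm_u0.
- apply: le_lt_trans (c0norm_le u0_sub_x0) _.
  by have := Hk_eps; have := Hk; lra.
Qed.

End Construction.

Lemma peak_operator_exists : exists (u0 : nat -> R) (T : (nat -> R) -> Y),
  [/\ c0 u0 /\ c0norm u0 = 1, positive_op le T /\ in_op_sphere T, `|T u0| = 1,
      c0norm (fun n => u0 n - x0 n) < eps & opnorm (fun x => T x - S x) < eps].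
Proof.
have [v Hv [Hv_abs Hv_sign]] := sign_decomposition HBL pos N y_ge0.
exact: peak_operator_spec Hv Hv_abs Hv_sign.
Qed.

End Peak.
End PeakOperator.

(* Chosen so that k <= eps / 24 and (1 - 3 k) (1 + delta (eps / 8)) >= 1. *)
Definition bpb_k (R : realType) (delta : R -> R) (eps : R) : R :=
  Num.min (eps / 24) (Num.min (delta (eps / 8)) 1 / 12).

Definition bpb_eta (R : realType) (delta : R -> R) (eps : R) : R :=
  Num.min (bpb_k delta eps)
    (delta (bpb_k delta eps ^+ 2) / (1 + delta (bpb_k delta eps ^+ 2))).

Lemma c0_BPBp_pos_with (R : realType) (Y : completeNormedModType R)
    (le : Y -> Y -> Prop) (delta : R -> R) :
  is_banach_lattice le -> um_modulus le delta -> BPBp_pos_with le (bpb_eta delta).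
Proof.
move=> HBL Hum eps /andP [He0 He1].
have He8 : 0 < eps / 8 by rewrite divr_gt0.
have Hd8 : 0 < delta (eps / 8) := (Hum _ He8).1.
set k := bpb_k delta eps; set D := Num.min (delta (eps / 8)) 1.
have HD0 : 0 < D by rewrite lt_min Hd8 ltr01.
have HD1 : D <= 1 by rewrite ge_min lexx orbT.
have HDd : D <= delta (eps / 8) by rewrite ge_min lexx.
have Hk0 : 0 < k by rewrite lt_min !divr_gt0.
have Hk_eps : k <= eps / 24 by rewrite ge_min lexx.
have Hk_D : k <= D / 12 by rewrite ge_min lexx orbT.
have Hk_delta : 1 <= (1 - 3 * k) * (1 + delta (eps / 8)).
  have : (1 - D / 4) * (1 + D) <= (1 - 3 * k) * (1 + delta (eps / 8)).
    by apply: ler_pM; lra.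
  by nra.
set d := delta (k ^+ 2); have Hd : 0 < d := (Hum _ (exprn_gt0 2 Hk0)).1.
have Heta_k : bpb_eta delta eps <= k by rewrite ge_min lexx.
have Heta_d : bpb_eta delta eps * (1 + d) <= d.
  by rewrite -ler_pdivlMr ?addr_gt0 // ge_min lexx orbT.
have Heta0 : 0 < bpb_eta delta eps by rewrite lt_min Hk0 divr_gt0 ?addr_gt0.
split; first by apply/andP; split => //; lra.
move=> S x0 HSp HS Hx0 Hx0n HSx0.
have Hk1 : 0 < 1 - k by lra.
have [N HN] := (c0P x0).1 Hx0 _ Hk1.
apply: (peak_operator_exists HBL Hum HSp HS Hx0 Hx0n Hk0 Hk_eps (ltW He1) Hk_delta
  Heta_k Heta_d HSx0) => n /HN; exact: ltW.
Qed.

Lemma uniformly_monotone_modulus (R : realType) (Y : completeNormedModType R)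
    (le : Y -> Y -> Prop) :
  uniformly_monotone le -> exists delta : R -> R, um_modulus le delta.
Proof.
move=> HU.
have Hex (e : R) : exists d : R, 0 < e -> 0 < d /\
    forall x y : Y, `|x| = 1 -> le 0 x -> le 0 y -> `|x + y| <= 1 + d -> `|y| <= e.
  case: (pselect (0 < e)) => [/HU [d Hd0 Hd]|He]; first by exists d.
  by exists 0 => /He.
have [delta Hdelta] := choice Hex.
by exists delta => e /Hdelta.
Qed.

Unset Implicit Arguments.

Theorem corollary3p3 (R : realType) :
  (forall (Y : completeNormedModType R) (le : Y -> Y -> Prop),
     is_banach_lattice le -> uniformly_monotone le -> BPBp_pos le) /\
  (forall delta : R -> R, exists eta : R -> R,
     forall (Y : completeNormedModType R) (le : Y -> Y -> Prop),
       is_banach_lattice le -> um_modulus le delta -> BPBp_pos_with le eta).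
Proof.
split=> [Y le HBL /uniformly_monotone_modulus [delta Hum]|delta].
  by exists (bpb_eta delta); exact: c0_BPBp_pos_with.
by exists (bpb_eta delta) => Y le HBL Hum; exact: c0_BPBp_pos_with.
Qed.
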